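(* Let $n$ be a positive integer and, for $k\in\{0,\dots,n-1\}$, let \[ b_k=(-1)^{n-k}\frac{n!}{k!}\binom{2n-k-1}{n-1},\qquad \beta_k=(-1)^{n-1}\frac{(2n-k-1)!}{k!\,(n-k-1)!}. \] Let $\widetilde\Delta(z)=z^n+\sum_{k=0}^{n-1}b_kz^k+e^{-z}\sum_{k=0}^{n-1}\beta_kz^k$. If $z\in\mathbb C$ is a root of $\widetilde\Delta$ with $z\neq0$, then $\operatorname{Re}z<0$. *)

From Stdlib Require Import Reals.
From Coquelicot Require Import Coquelicot.

Open Scope R_scope.

Definition Cexp (z : C) : C :=
  (exp (Re z) * cos (Im z), exp (Re z) * sin (Im z)).

Definition bcoef (n k : nat) : R :=
  (-1) ^ (n - k) * (INR (Factorial.fact n) / INR (Factorial.fact k)) * Binomial.C (2 * n - k - 1) (n - 1).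

Definition betacoef (n k : nat) : R :=
  (-1) ^ (n - 1) * (INR (Factorial.fact (2 * n - k - 1)) / (INR (Factorial.fact k) * INR (Factorial.fact (n - k - 1)))).

Definition Delta_tilde (n : nat) (z : C) : C :=
  (Cpow z n
   + sum_n (fun k => RtoC (bcoef n k) * Cpow z k) (n - 1)
   + Cexp (- z) * sum_n (fun k => RtoC (betacoef n k) * Cpow z k) (n - 1))%C.

(* Write n = m + 1, P(s) = s^m (1-s)^(m+1) and L_z(w) = \int_0^1 w(s) e^((1/2 - s) z) ds.
   Integrating by parts 2m+2 times, the boundary terms are the Taylor coefficients of P at
   s = 0 and s = 1, which are the b_k and beta_k; hence m! Delta~(z) = z^(2m+2) e^(-z/2) L_z(P), and
   a nonzero root has L_z(P) = 0.  As P = (s(1-s))^m (1/2 + (1/2 - s)), L_z(P) = a(1)/2 + c(1),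
   where a(t), c(t), d(t) are L_(tz) applied to (s(1-s))^m times 1, (1/2 - s), (1/2 - s)^2.
   Differentiating in t and integrating by parts once more give a' = z c, c' = z d and
   t z (a/4 - d) = (2m+2) c, so that W(t) = t^(2m+2) Re(c conj(a)) has
   W' = Re z t^(2m+2) (|a|^2/4 + |c|^2).  If Re z >= 0 then W(1) >= W(0) = 0, whereas
   c(1) = -a(1)/2 gives W(1) = -|a(1)|^2/2.  So a(1) = c(1) = 0, which a descent on m through
   the same integration-by-parts relations rules out. *)

From Stdlib Require Import Reals Lra Lia Factorial.
From Coquelicot Require Import Coquelicot.

Open Scope R_scope.

Definition Rcontinuous (f : R -> R) : Prop := forall x, continuous f x.

Lemma Rcontinuous_const c : Rcontinuous (fun _ => c).
Proof. intro x; apply continuous_const. Qed.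

Lemma Rcontinuous_plus f g :
  Rcontinuous f -> Rcontinuous g -> Rcontinuous (fun x => f x + g x).
Proof. intros Hf Hg x; apply (continuous_plus f g); auto. Qed.

Lemma Rcontinuous_mult f g :
  Rcontinuous f -> Rcontinuous g -> Rcontinuous (fun x => f x * g x).
Proof. intros Hf Hg x; apply (continuous_mult f g); auto. Qed.

Lemma Rcontinuous_comp f g :
  Rcontinuous f -> Rcontinuous g -> Rcontinuous (fun x => g (f x)).
Proof. intros Hf Hg x; apply (continuous_comp f g); auto. Qed.

#[export] Hint Resolve Rcontinuous_const Rcontinuous_plus Rcontinuous_mult
  : Rcontinuous.

Lemma Rcontinuous_derive f df :
  (forall x, is_derive f x (df x)) -> Rcontinuous f.
Proof.
  intros Hf x. apply (ex_derive_continuous (K := R_AbsRing) (V := R_NormedModule)).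
  eexists; apply Hf.
Qed.

Lemma is_derive_eq (f : R -> R) (x l l' : R) : is_derive f x l -> l = l' -> is_derive f x l'.
Proof. now intros H <-. Qed.

Lemma ex_RInt_Rcontinuous (f : R -> R) a b : Rcontinuous f -> ex_RInt f a b.
Proof. intro Hf. apply (ex_RInt_continuous (V := R_CompleteNormedModule)); auto. Qed.

Lemma RInt_ext_le (f g : R -> R) a b : a <= b ->
  (forall s, a <= s <= b -> f s = g s) -> RInt f a b = RInt g a b.
Proof.
  intros Hab Hfg. apply (RInt_ext (V := R_CompleteNormedModule)). intros s Hs.
  rewrite Rmin_left, Rmax_right in Hs by lra. apply Hfg; lra.
Qed.

Lemma RInt_lin (f g : R -> R) a b p q : ex_RInt f a b -> ex_RInt g a b ->
  RInt (fun s => p * f s + q * g s) a b = p * RInt f a b + q * RInt g a b.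
Proof.
  intros [If Hf] [Ig Hg]. apply is_RInt_unique.
  rewrite (is_RInt_unique _ _ _ _ Hf), (is_RInt_unique _ _ _ _ Hg).
  apply (is_RInt_plus (fun s => p * f s) (fun s => q * g s));
    [apply (is_RInt_scal f) | apply (is_RInt_scal g)]; assumption.
Qed.

Lemma derive_nonneg_le f df a b : a <= b ->
  (forall t, is_derive f t (df t)) -> (forall t, a <= t <= b -> 0 <= df t) -> f a <= f b.
Proof.
  intros Hab Hf Hdf.
  destruct (MVT_gen f a b df) as [c [Hc Hfc]].
  - intros; apply Hf.
  - intros t _. apply continuity_pt_filterlim, (Rcontinuous_derive f df Hf).
  - rewrite Rmin_left, Rmax_right in Hc by lra. specialize (Hdf c Hc). nra.
Qed.

Definition exp_cos (x y r : R) : R := exp (r * x) * cos (r * y).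
Definition exp_sin (x y r : R) : R := exp (r * x) * sin (r * y).

Lemma is_derive_exp_cos x y r :
  is_derive (exp_cos x y) r (x * exp_cos x y r + - y * exp_sin x y r).
Proof. unfold exp_cos, exp_sin. auto_derive; auto. ring. Qed.

Lemma is_derive_exp_sin x y r :
  is_derive (exp_sin x y) r (x * exp_sin x y r + y * exp_cos x y r).
Proof. unfold exp_cos, exp_sin. auto_derive; auto. ring. Qed.

Lemma Rcontinuous_exp_cos x y : Rcontinuous (exp_cos x y).
Proof. exact (Rcontinuous_derive _ _ (is_derive_exp_cos x y)). Qed.

Lemma Rcontinuous_exp_sin x y : Rcontinuous (exp_sin x y).
Proof. exact (Rcontinuous_derive _ _ (is_derive_exp_sin x y)). Qed.

#[export] Hint Resolve Rcontinuous_exp_cos Rcontinuous_exp_sin : Rcontinuous.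

Lemma exp_cos_scale t x y r : exp_cos (t * x) (t * y) r = exp_cos x y (r * t).
Proof. unfold exp_cos. now rewrite <- !Rmult_assoc. Qed.

Lemma exp_sin_scale t x y r : exp_sin (t * x) (t * y) r = exp_sin x y (r * t).
Proof. unfold exp_sin. now rewrite <- !Rmult_assoc. Qed.

Lemma exp_cos_plus x y a b :
  exp_cos x y (a + b) = exp_cos x y a * exp_cos x y b - exp_sin x y a * exp_sin x y b.
Proof. unfold exp_cos, exp_sin. rewrite !Rmult_plus_distr_r, exp_plus, cos_plus. ring. Qed.

Lemma exp_sin_plus x y a b :
  exp_sin x y (a + b) = exp_sin x y a * exp_cos x y b + exp_cos x y a * exp_sin x y b.
Proof. unfold exp_cos, exp_sin. rewrite !Rmult_plus_distr_r, exp_plus, sin_plus. ring. Qed.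

Lemma exp_cos_sin_sqr_pos x y r : 0 < exp_cos x y r ^ 2 + exp_sin x y r ^ 2.
Proof.
  unfold exp_cos, exp_sin.
  replace ((exp (r * x) * cos (r * y)) ^ 2 + (exp (r * x) * sin (r * y)) ^ 2)
    with (exp (r * x) ^ 2 * (Rsqr (sin (r * y)) + Rsqr (cos (r * y)))) by (unfold Rsqr; ring).
  rewrite sin2_cos2, Rmult_1_r. apply pow_lt, exp_pos.
Qed.

Definition cexp_ray (z : C) (r : R) : C :=
  (exp_cos (Re z) (Im z) r, exp_sin (Re z) (Im z) r).

Lemma cexp_ray_plus z a b : (cexp_ray z a * cexp_ray z b)%C = cexp_ray z (a + b).
Proof.
  unfold cexp_ray. rewrite exp_cos_plus, exp_sin_plus.
  apply injective_projections; simpl; ring.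
Qed.

Lemma cexp_ray_0 z : cexp_ray z 0 = 1%C.
Proof.
  unfold cexp_ray, exp_cos, exp_sin. rewrite !Rmult_0_l, exp_0, cos_0, sin_0.
  apply injective_projections; simpl; ring.
Qed.

Lemma cexp_ray_neq0 z r : cexp_ray z r <> 0%C.
Proof.
  intro H. pose proof (exp_cos_sin_sqr_pos (Re z) (Im z) r) as Hpos.
  unfold cexp_ray in H. injection H as Hc Hs. rewrite Hc, Hs in Hpos. lra.
Qed.

Lemma Cexp_opp z : Cexp (- z) = cexp_ray z (-1).
Proof.
  unfold Cexp, cexp_ray, exp_cos, exp_sin. destruct z as [x y]; simpl.
  now replace (-1 * x) with (- x) by ring; replace (-1 * y) with (- y) by ring.
Qed.

(** * Integration against e^((1/2 - s) z) *)

Definition centred (s : R) : R := /2 - s.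

Lemma is_derive_centred s : is_derive centred s (-1).
Proof. unfold centred. auto_derive; auto; ring. Qed.

Lemma Rcontinuous_centred : Rcontinuous centred.
Proof. exact (Rcontinuous_derive _ _ is_derive_centred). Qed.

#[export] Hint Resolve Rcontinuous_centred : Rcontinuous.

Definition weighted_int (g w : R -> R) : R := RInt (fun s => w s * g (centred s)) 0 1.

Lemma ex_RInt_weighted g w : Rcontinuous g -> Rcontinuous w ->
  ex_RInt (fun s => w s * g (centred s)) 0 1.
Proof.
  intros Hg Hw. apply ex_RInt_Rcontinuous, Rcontinuous_mult; [exact Hw|].
  exact (Rcontinuous_comp _ _ Rcontinuous_centred Hg).
Qed.

Lemma weighted_int_ext g w1 w2 : (forall s, 0 <= s <= 1 -> w1 s = w2 s) ->
  weighted_int g w1 = weighted_int g w2.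
Proof. intro H. apply RInt_ext_le; [lra|]. intros s Hs. now rewrite H. Qed.

Lemma weighted_int_ext_g g1 g2 w : (forall r, g1 r = g2 r) ->
  weighted_int g1 w = weighted_int g2 w.
Proof. intro H. apply RInt_ext_le; [lra|]. intros s _. now rewrite H. Qed.

Lemma weighted_int_lin_w g w1 w2 p q :
  Rcontinuous g -> Rcontinuous w1 -> Rcontinuous w2 ->
  weighted_int g (fun s => p * w1 s + q * w2 s)
  = p * weighted_int g w1 + q * weighted_int g w2.
Proof.
  intros Hg H1 H2. unfold weighted_int. rewrite <- RInt_lin by (apply ex_RInt_weighted; auto).
  apply RInt_ext_le; [lra|]. intros; ring.
Qed.

Lemma weighted_int_lin_g g1 g2 w p q :
  Rcontinuous g1 -> Rcontinuous g2 -> Rcontinuous w ->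
  weighted_int (fun r => p * g1 r + q * g2 r) w
  = p * weighted_int g1 w + q * weighted_int g2 w.
Proof.
  intros H1 H2 Hw. unfold weighted_int. rewrite <- RInt_lin by (apply ex_RInt_weighted; auto).
  apply RInt_ext_le; [lra|]. intros; ring.
Qed.

Lemma weighted_int_by_parts (g dg w dw : R -> R) :
  (forall r, is_derive g r (dg r)) -> Rcontinuous dg ->
  (forall s, is_derive w s (dw s)) -> Rcontinuous dw ->
  weighted_int g dw = w 1 * g (- / 2) - w 0 * g (/ 2) + weighted_int dg w.
Proof.
  intros Hg Hdg Hw Hdw.
  assert (Hgc : forall s, is_derive (fun s => g (centred s)) s (- dg (centred s))).
  { intro s. replace (- dg (centred s)) with (scal (-1) (dg (centred s)))
      by (unfold scal; simpl; unfold mult; simpl; ring).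
    exact (is_derive_comp g centred s _ _ (Hg (centred s)) (is_derive_centred s)). }
  assert (Hdgc : Rcontinuous (fun s => - dg (centred s))).
  { apply (Rcontinuous_comp centred (fun r => - dg r) Rcontinuous_centred).
    intro r. exact (continuous_opp _ _ (Hdg r)). }
  pose proof (is_RInt_scal_derive w (fun s => g (centred s)) dw (fun s => - dg (centred s)) 0 1
    (fun s _ => Hw s) (fun s _ => Hgc s) (fun s _ => Hdw s) (fun s _ => Hdgc s)) as H.
  apply is_RInt_unique in H.
  rewrite (RInt_ext_le _ (fun s => 1 * (dw s * g (centred s)) + -1 * (w s * dg (centred s))))
    in H; [| lra | intros; unfold plus, scal; simpl; unfold mult; simpl; ring].
  rewrite RInt_lin in H by (apply ex_RInt_weighted; eauto using Rcontinuous_derive).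
  unfold minus, plus, opp, scal in H; simpl in H; unfold mult in H; simpl in H.
  unfold weighted_int, centred in *. replace (/ 2 - 1) with (- / 2) in H by field.
  rewrite Rminus_0_r in H. lra.
Qed.

Lemma is_derive_weighted_int_dilate (g dg w : R -> R) t :
  (forall r, is_derive g r (dg r)) -> Rcontinuous dg -> Rcontinuous w ->
  is_derive (fun t => weighted_int (fun r => g (r * t)) w) t
    (weighted_int (fun r => dg (r * t)) (fun s => w s * centred s)).
Proof.
  intros Hg Hdg Hw.
  set (F u s := w s * g (centred s * u)).
  assert (HF : forall u s, is_derive (fun u => F u s) u (w s * (centred s * dg (centred s * u)))).
  { intros u s. apply (is_derive_scal (fun u => g (centred s * u))).
    replace (centred s * dg (centred s * u)) with (scal (centred s) (dg (centred s * u)))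
      by (unfold scal; simpl; unfold mult; simpl; ring).
    apply (is_derive_comp g (fun u => centred s * u)); [apply Hg|].
    auto_derive; auto; ring. }
  assert (Hcomp : forall u, Rcontinuous (fun s => centred s * u)).
  { intro u. apply Rcontinuous_mult; [apply Rcontinuous_centred | apply Rcontinuous_const]. }
  unfold weighted_int.
  rewrite (RInt_ext_le _ (fun s => Derive (fun u => F u s) t)); [| lra |].
  2: { intros s _. rewrite (is_derive_unique (fun u : R => F u s) _ _ (HF t s)). ring. }
  apply (is_derive_RInt_param F 0 1 t).
  - apply filter_forall. intros u s _. eexists. apply HF.
  - intros s _.
    apply continuity_2d_pt_ext with (f := fun u s => w s * (centred s * dg (centred s * u))).
    { intros u v. now rewrite (is_derive_unique (fun u : R => F u v) _ _ (HF u v)). }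
    assert (Hs : forall h : R -> R, Rcontinuous h -> continuity_2d_pt (fun _ s => h s) t s).
    { intros h Hh. apply (continuity_1d_2d_pt_comp h (fun _ s => s)).
      - apply continuity_pt_filterlim, Hh.
      - apply continuity_2d_pt_id2. }
    apply continuity_2d_pt_mult; [now apply Hs|].
    apply continuity_2d_pt_mult; [apply Hs, Rcontinuous_centred|].
    apply (continuity_1d_2d_pt_comp dg (fun u s => centred s * u)).
    + apply continuity_pt_filterlim, Hdg.
    + apply continuity_2d_pt_mult; [apply Hs, Rcontinuous_centred | apply continuity_2d_pt_id1].
  - apply filter_forall. intro u. apply ex_RInt_Rcontinuous, Rcontinuous_mult; [exact Hw|].
    exact (Rcontinuous_comp _ _ (Hcomp u) (Rcontinuous_derive _ _ Hg)).
Qed.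

(* [laplace z w] is L_z(w) = \int_0^1 w(s) e^((1/2 - s) z) ds. *)
Definition laplace (z : C) (w : R -> R) : C :=
  (weighted_int (exp_cos (Re z) (Im z)) w, weighted_int (exp_sin (Re z) (Im z)) w).

Lemma laplace_ext z w1 w2 : (forall s, 0 <= s <= 1 -> w1 s = w2 s) ->
  laplace z w1 = laplace z w2.
Proof. intro H. unfold laplace. now rewrite !(weighted_int_ext _ w1 w2 H). Qed.

Lemma laplace_lin z w1 w2 p q : Rcontinuous w1 -> Rcontinuous w2 ->
  laplace z (fun s => p * w1 s + q * w2 s) = (RtoC p * laplace z w1 + RtoC q * laplace z w2)%C.
Proof.
  intros H1 H2. unfold laplace.
  rewrite !weighted_int_lin_w by auto with Rcontinuous.
  apply injective_projections; simpl; ring.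
Qed.

Lemma laplace_scal z w p : Rcontinuous w ->
  laplace z (fun s => p * w s) = (RtoC p * laplace z w)%C.
Proof.
  intro Hw. rewrite (laplace_ext z _ (fun s => p * w s + 0 * w s)) by (intros; ring).
  rewrite laplace_lin by auto. apply injective_projections; simpl; ring.
Qed.

Definition boundary_term (z : C) (w : R -> R) : C :=
  (RtoC (w 0) * cexp_ray z (/ 2) - RtoC (w 1) * cexp_ray z (- / 2))%C.

Lemma laplace_by_parts z (w dw : R -> R) :
  (forall s, is_derive w s (dw s)) -> Rcontinuous dw ->
  (z * laplace z w = laplace z dw + boundary_term z w)%C.
Proof.
  intros Hw Hdw. destruct z as [x y]. unfold laplace, boundary_term, cexp_ray. simpl.
  assert (Hc := Rcontinuous_derive _ _ Hw).
  pose proof (weighted_int_by_parts (exp_cos x y)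
    (fun r => x * exp_cos x y r + - y * exp_sin x y r) w dw (is_derive_exp_cos x y)
    ltac:(auto with Rcontinuous) Hw Hdw) as Hre.
  pose proof (weighted_int_by_parts (exp_sin x y)
    (fun r => x * exp_sin x y r + y * exp_cos x y r) w dw (is_derive_exp_sin x y)
    ltac:(auto with Rcontinuous) Hw Hdw) as Him.
  rewrite weighted_int_lin_g in Hre, Him by auto with Rcontinuous.
  apply injective_projections; simpl; lra.
Qed.

Lemma laplace_dilate x y t w : laplace (t * x, t * y) w
  = (weighted_int (fun r => exp_cos x y (r * t)) w, weighted_int (fun r => exp_sin x y (r * t)) w).
Proof.
  unfold laplace; simpl. f_equal; apply weighted_int_ext_g; intro.
  - apply exp_cos_scale.
  - apply exp_sin_scale.
Qed.

Lemma is_derive_laplace_dilate x y w t : Rcontinuous w ->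
  is_derive (fun t => Re (laplace (t * x, t * y) w)) t
    (x * Re (laplace (t * x, t * y) (fun s => w s * centred s))
     - y * Im (laplace (t * x, t * y) (fun s => w s * centred s))) /\
  is_derive (fun t => Im (laplace (t * x, t * y) w)) t
    (x * Im (laplace (t * x, t * y) (fun s => w s * centred s))
     + y * Re (laplace (t * x, t * y) (fun s => w s * centred s))).
Proof.
  intro Hw.
  assert (Hdil : forall g : R -> R, Rcontinuous g -> Rcontinuous (fun r => g (r * t))).
  { intros g Hg. apply (Rcontinuous_comp (fun r => r * t)); auto with Rcontinuous.
    apply (Rcontinuous_derive _ (fun _ => t)). intro; auto_derive; auto; ring. }
  pose proof (is_derive_weighted_int_dilate _ _ w t (is_derive_exp_cos x y)
    ltac:(auto with Rcontinuous) Hw) as Hre.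
  pose proof (is_derive_weighted_int_dilate _ _ w t (is_derive_exp_sin x y)
    ltac:(auto with Rcontinuous) Hw) as Him.
  cbv beta in Hre, Him.
  rewrite weighted_int_lin_g in Hre, Him
    by (apply Hdil; auto with Rcontinuous) || auto with Rcontinuous.
  rewrite laplace_dilate.
  split; (eapply is_derive_ext; [intro u; symmetry; rewrite laplace_dilate; reflexivity |]); simpl.
  - apply (is_derive_eq _ _ _ _ Hre). ring.
  - apply (is_derive_eq _ _ _ _ Him). ring.
Qed.

Definition bump (m : nat) (s : R) : R := (s * (1 - s)) ^ m.

Lemma Rcontinuous_bump m : Rcontinuous (bump m).
Proof.
  intro s. apply (ex_derive_continuous (K := R_AbsRing) (V := R_NormedModule)).
  unfold bump; auto_derive; auto.
Qed.

#[export] Hint Resolve Rcontinuous_bump : Rcontinuous.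

Lemma bump_S_0 m : bump (S m) 0 = 0.
Proof. unfold bump; simpl; ring. Qed.

Lemma bump_S_1 m : bump (S m) 1 = 0.
Proof. unfold bump; simpl; ring. Qed.

Lemma bump_S m s : bump (S m) s = / 4 * bump m s + -1 * (bump m s * centred s * centred s).
Proof. unfold bump, centred; simpl; field. Qed.

Lemma is_derive_bump m s :
  is_derive (bump (S m)) s (2 * INR (S m) * (bump m s * centred s)).
Proof.
  unfold bump, centred. auto_derive; auto.
  change (match m with 0%nat => 1 | S _ => INR m + 1 end) with (INR (S m)).
  unfold Rminus; field.
Qed.

Lemma is_derive_bump_centred m s :
  is_derive (fun s => (bump (S m) s * centred s)%R) s
    (2 * INR (S m) * (bump m s * centred s * centred s) + -1 * bump (S m) s).
Proof.
  unfold bump, centred. auto_derive; auto.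
  change (match m with 0%nat => 1 | S _ => INR m + 1 end) with (INR (S m)).
  simpl; unfold Rminus; field.
Qed.

Lemma Cmult_RtoC_eq0 k u : k <> 0 -> (RtoC k * u)%C = 0%C -> u = 0%C.
Proof.
  intros Hk H. destruct u as [a b]. unfold Cmult, RtoC in H; simpl in H.
  injection H as Ha Hb. apply injective_projections; simpl.
  - apply (Rmult_eq_reg_l k); lra.
  - apply (Rmult_eq_reg_l k); lra.
Qed.

Lemma laplace_bump_by_parts z m :
  (z * laplace z (bump (S m))
   = RtoC (2 * INR (S m)) * laplace z (fun s => (bump m s * centred s)%R))%C.
Proof.
  rewrite (laplace_by_parts z _ _ (is_derive_bump m)) by auto with Rcontinuous.
  unfold boundary_term. rewrite bump_S_0, bump_S_1, laplace_scal by auto with Rcontinuous.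
  apply injective_projections; simpl; ring.
Qed.

Lemma laplace_bump_centred_by_parts z m :
  (z * laplace z (fun s => (bump (S m) s * centred s)%R)
   = RtoC (2 * INR (S m)) * laplace z (fun s => (bump m s * centred s * centred s)%R)
     - laplace z (bump (S m)))%C.
Proof.
  rewrite (laplace_by_parts z (fun s => bump (S m) s * centred s) _ (is_derive_bump_centred m))
    by auto with Rcontinuous.
  unfold boundary_term. rewrite bump_S_0, bump_S_1, laplace_lin by auto with Rcontinuous.
  apply injective_projections; simpl; ring.
Qed.

Lemma laplace_bump_S z m :
  laplace z (bump (S m))
  = (RtoC (/ 4) * laplace z (bump m) - laplace z (fun s => (bump m s * centred s * centred s)%R))%C.
Proof.
  rewrite (laplace_ext z _ _ (fun s _ => bump_S m s)), laplace_lin by auto with Rcontinuous.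
  apply injective_projections; simpl; ring.
Qed.

(* No hypothesis on [z] is needed: for [m = 0] the two equations force
   [e^(z/2) = e^(-z/2) = - e^(-z/2)]. *)
Lemma laplace_bump_neq0 z m :
  laplace z (bump m) = 0%C -> laplace z (fun s => (bump m s * centred s)%R) <> 0%C.
Proof.
  induction m as [|m IH]; intros H0 H1.
  - pose proof (laplace_by_parts z (fun _ => 1) (fun _ => 0) (is_derive_const 1)
      ltac:(auto with Rcontinuous)) as E0.
    pose proof (laplace_by_parts z centred (fun _ => -1) is_derive_centred
      ltac:(auto with Rcontinuous)) as E1.
    rewrite (laplace_ext z (fun _ => 0) (fun _ => 0 * 1)), laplace_scal in E0
      by (auto with Rcontinuous; intros; ring).
    rewrite (laplace_ext z (fun _ => -1) (fun _ => -1 * 1)), laplace_scal in E1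
      by (auto with Rcontinuous; intros; ring).
    rewrite (laplace_ext z (bump 0) (fun _ => 1)) in H0 by reflexivity.
    rewrite (laplace_ext z _ centred) in H1 by (intros; unfold bump; simpl; ring).
    unfold boundary_term in E0, E1. rewrite H0 in E0, E1. rewrite H1 in E1.
    apply (cexp_ray_neq0 z (/ 2)). unfold centred in E1.
    replace (/ 2 - 0) with (/ 2) in E1 by ring. replace (/ 2 - 1) with (- / 2) in E1 by field.
    destruct (cexp_ray z (/ 2)) as [a b], (cexp_ray z (- / 2)) as [c d].
    apply (f_equal fst) in E0 as E0r. apply (f_equal snd) in E0 as E0i.
    apply (f_equal fst) in E1 as E1r. apply (f_equal snd) in E1 as E1i.
    simpl in *. apply injective_projections; simpl; lra.
  - assert (Hk : 2 * INR (S m) <> 0) by (rewrite S_INR; pose proof (pos_INR m); lra).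
    pose proof (laplace_bump_centred_by_parts z m) as E2.
    pose proof (laplace_bump_S z m) as E3.
    pose proof (laplace_bump_by_parts z m) as E4.
    rewrite H0, H1 in E2. rewrite H0 in E3, E4.
    assert (H2 : laplace z (fun s => (bump m s * centred s * centred s)%R) = 0%C).
    { apply (Cmult_RtoC_eq0 _ _ Hk).
      replace (RtoC _ * _)%C with (z * 0 + 0)%C by (rewrite E2; ring). ring. }
    rewrite H2 in E3.
    apply IH.
    + apply (Cmult_RtoC_eq0 (/ 4)); [lra|].
      replace (RtoC _ * _)%C with (RtoC (/ 4) * laplace z (bump m) - 0)%C by ring.
      now rewrite <- E3.
    + apply (Cmult_RtoC_eq0 _ _ Hk). rewrite <- E4. ring.
Qed.

(** * The right half-plane *)

Section Wronskian.

Variables (x y : R) (k : nat) (aR aI cR cI dR dI : R -> R).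

Hypothesis is_derive_aR : forall t, is_derive aR t (x * cR t - y * cI t).
Hypothesis is_derive_aI : forall t, is_derive aI t (x * cI t + y * cR t).
Hypothesis is_derive_cR : forall t, is_derive cR t (x * dR t - y * dI t).
Hypothesis is_derive_cI : forall t, is_derive cI t (x * dI t + y * dR t).
Hypothesis equation_re : forall t,
  t * (x * dR t - y * dI t) = t * (x * aR t - y * aI t) / 4 - INR (S k) * cR t.
Hypothesis equation_im : forall t,
  t * (x * dI t + y * dR t) = t * (x * aI t + y * aR t) / 4 - INR (S k) * cI t.

Lemma is_derive_wronskian t :
  is_derive (fun t => t ^ S k * (cR t * aR t + cI t * aI t)) t
    (x * t ^ S k * ((aR t ^ 2 + aI t ^ 2) / 4 + cR t ^ 2 + cI t ^ 2)).
Proof.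
  auto_derive.
  - repeat split; eexists; eauto.
  - rewrite (is_derive_unique (fun u : R => aR u) _ _ (is_derive_aR t)),
      (is_derive_unique (fun u : R => aI u) _ _ (is_derive_aI t)),
      (is_derive_unique (fun u : R => cR u) _ _ (is_derive_cR t)),
      (is_derive_unique (fun u : R => cI u) _ _ (is_derive_cI t)).
    change (match k with 0%nat => 1 | S _ => INR k + 1 end) with (INR (S k)).
    transitivity (t ^ k * (INR (S k) * (cR t * aR t + cI t * aI t)
      + t * (x * dR t - y * dI t) * aR t + t * (x * dI t + y * dR t) * aI t
      + t * x * (cR t ^ 2 + cI t ^ 2))).
    + simpl; ring.
    + rewrite equation_re, equation_im. simpl; field.
Qed.

Lemma wronskian_at_1_nonneg : 0 <= x -> 0 <= cR 1 * aR 1 + cI 1 * aI 1.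
Proof.
  intro Hx.
  pose proof (derive_nonneg_le _ _ 0 1 Rle_0_1 is_derive_wronskian) as H.
  cbv beta in H. rewrite pow_i, pow1 in H by lia.
  enough (0 * (cR 0 * aR 0 + cI 0 * aI 0) <= 1 * (cR 1 * aR 1 + cI 1 * aI 1)) by lra.
  apply H. intros t Ht.
  apply Rmult_le_pos; [apply Rmult_le_pos; [exact Hx | apply pow_le; lra] | nra].
Qed.

End Wronskian.

Lemma laplace_bump_ray_equation x y m t :
  let a := laplace (t * x, t * y) (bump m) in
  let c := laplace (t * x, t * y) (fun s => (bump m s * centred s)%R) in
  let d := laplace (t * x, t * y) (fun s => (bump m s * centred s * centred s)%R) in
  t * (x * Re d - y * Im d) = t * (x * Re a - y * Im a) / 4 - INR (S (2 * m + 1)) * Re c /\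
  t * (x * Im d + y * Re d) = t * (x * Im a + y * Re a) / 4 - INR (S (2 * m + 1)) * Im c.
Proof.
  intros a c d.
  pose proof (laplace_bump_by_parts (t * x, t * y) m) as H.
  rewrite laplace_bump_S in H. fold a c d in H.
  replace (INR (S (2 * m + 1))) with (2 * INR (S m))
    by (rewrite !S_INR, plus_INR, mult_INR; simpl; ring).
  set (k := INR (S m)) in *.
  destruct a as [aR aI], c as [cR cI], d as [dR dI].
  apply (f_equal Re) in H as Hre. apply (f_equal Im) in H as Him. simpl in Hre, Him |- *.
  split; lra.
Qed.

Lemma laplace_bump_half_plane_neq0 x y m : 0 <= x ->
  (RtoC (/ 2) * laplace (x, y) (bump m) + laplace (x, y) (fun s => (bump m s * centred s)%R))%C
  <> 0%C.
Proof.
  intros Hx H.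
  pose proof (fun t => is_derive_laplace_dilate x y (bump m) t (Rcontinuous_bump m)) as Da.
  pose proof (fun t => is_derive_laplace_dilate x y (fun s => bump m s * centred s) t
    ltac:(auto with Rcontinuous)) as Dc.
  pose proof (laplace_bump_ray_equation x y m) as Eq.
  pose proof (wronskian_at_1_nonneg x y (2 * m + 1) _ _ _ _ _ _
    (fun t => proj1 (Da t)) (fun t => proj2 (Da t)) (fun t => proj1 (Dc t))
    (fun t => proj2 (Dc t)) (fun t => proj1 (Eq t)) (fun t => proj2 (Eq t)) Hx) as Hw.
  cbv beta in Hw. rewrite !Rmult_1_l in Hw.
  assert (Hzero : laplace (x, y) (bump m) = 0%C /\
                  laplace (x, y) (fun s => (bump m s * centred s)%R) = 0%C).
  { revert H Hw.
    generalize (laplace (x, y) (bump m)) (laplace (x, y) (fun s => (bump m s * centred s)%R)).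
    intros [aR aI] [cR cI] H Hw. simpl in Hw.
    apply (f_equal Re) in H as Hre. apply (f_equal Im) in H as Him. simpl in Hre, Him.
    split; apply injective_projections; simpl; nra. }
  exact (laplace_bump_neq0 _ _ (proj1 Hzero) (proj2 Hzero)).
Qed.

(** * Repeated integration by parts against a polynomial *)

Definition poly_sum (c : nat -> R) (N : nat) (s : R) : R := sum_f_R0 (fun i => c i * s ^ i) N.

Definition deriv_coef (c : nat -> R) (i : nat) : R := INR (S i) * c (S i).

Lemma is_derive_monomial a k s : is_derive (fun s => a * s ^ S k) s (a * INR (S k) * s ^ k).
Proof.
  auto_derive; auto. change (match k with 0%nat => 1 | S _ => INR k + 1 end) with (INR (S k)).
  simpl; ring.
Qed.

Lemma is_derive_poly_sum_S c N s :
  is_derive (poly_sum c (S N)) s (poly_sum (deriv_coef c) N s).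
Proof.
  induction N as [|N IH].
  - unfold poly_sum, deriv_coef. simpl. auto_derive; auto. simpl. ring.
  - apply (is_derive_eq _ _ _ _
      (is_derive_plus _ _ s _ _ IH (is_derive_monomial (c (S (S N))) (S N) s))).
    unfold poly_sum, deriv_coef; simpl; unfold plus; simpl; ring.
Qed.

Lemma is_derive_poly_sum c N s : c (S N) = 0 ->
  is_derive (poly_sum c N) s (poly_sum (deriv_coef c) N s).
Proof.
  intro Hc. eapply is_derive_ext; [| apply is_derive_poly_sum_S].
  intro t. unfold poly_sum. simpl. rewrite Hc. ring.
Qed.

Lemma iter_deriv_coef j c i :
  Nat.iter j deriv_coef c i = INR (fact (i + j)) / INR (fact i) * c (i + j)%nat.
Proof.
  revert i. induction j as [|j IH]; intro i; simpl Nat.iter.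
  - rewrite Nat.add_0_r. field. apply INR_fact_neq_0.
  - unfold deriv_coef. rewrite IH, <- plus_n_Sm, (fact_simpl i), mult_INR. simpl (S i + j)%nat.
    field. split; [apply INR_fact_neq_0 | apply not_0_INR; lia].
Qed.

Lemma iter_deriv_coef_0 j c : Nat.iter j deriv_coef c 0%nat = INR (fact j) * c j.
Proof. rewrite iter_deriv_coef. simpl. field. Qed.

Lemma poly_sum_0 c N : poly_sum c N 0 = c 0%nat.
Proof.
  unfold poly_sum. induction N as [|N IH]; simpl.
  - ring.
  - rewrite IH. ring.
Qed.

Lemma poly_sum_eq0 c N s : (forall i, (i <= N)%nat -> c i = 0) -> poly_sum c N s = 0.
Proof.
  intro H. unfold poly_sum. induction N as [|N IH]; simpl.
  - rewrite H by lia. ring.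
  - rewrite IH, H by auto. ring.
Qed.

Lemma iter_deriv_coef_support N e j : (forall i, (N < i)%nat -> e i = 0) ->
  Nat.iter j deriv_coef e (S N) = 0.
Proof. intro He. rewrite iter_deriv_coef, He by lia. ring. Qed.

Section Reflection.

Variables (c d : nat -> R) (N : nat).
Hypothesis c_support : forall i, (N < i)%nat -> c i = 0.
Hypothesis d_support : forall i, (N < i)%nat -> d i = 0.
Hypothesis c_d_reflect : forall s, poly_sum c N s = poly_sum d N (1 - s).

Lemma poly_sum_deriv_reflect j s :
  poly_sum (Nat.iter j deriv_coef c) N s = (-1) ^ j * poly_sum (Nat.iter j deriv_coef d) N (1 - s).
Proof.
  revert s. induction j as [|j IH]; intro s.
  - simpl. rewrite c_d_reflect. ring.
  - pose proof (is_derive_poly_sum _ N s (iter_deriv_coef_support N c j c_support)) as Dc.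
    assert (Dd : is_derive (fun s => (-1) ^ j * poly_sum (Nat.iter j deriv_coef d) N (1 - s)) s
                   ((-1) ^ S j * poly_sum (Nat.iter (S j) deriv_coef d) N (1 - s))).
    { apply (is_derive_eq _ _ _ _ (is_derive_scal _ _ _ _
        (is_derive_comp _ (fun s => 1 - s) s _ (-1)
          (is_derive_poly_sum _ N (1 - s) (iter_deriv_coef_support N d j d_support))
          ltac:(auto_derive; auto; ring)))).
      simpl; unfold scal; simpl; unfold mult; simpl; ring. }
    apply (is_derive_ext _ _ _ _ IH) in Dc.
    rewrite <- (is_derive_unique _ _ _ Dd). symmetry. exact (is_derive_unique _ _ _ Dc).
Qed.

End Reflection.

Fixpoint csum (f : nat -> C) (k : nat) : C :=
  match k with O => 0%C | S k => (csum f k + f k)%C end.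

Lemma csum_ext (f g : nat -> C) k : (forall i, (i < k)%nat -> f i = g i) -> csum f k = csum g k.
Proof.
  induction k as [|k IH]; intro H; simpl; [reflexivity|].
  rewrite IH, H; [reflexivity | lia | intros; apply H; lia].
Qed.

Lemma csum_mult_l a (f : nat -> C) k : (a * csum f k = csum (fun i => a * f i) k)%C.
Proof. induction k as [|k IH]; simpl; [ring|]. rewrite <- IH. ring. Qed.

Lemma csum_plus (f g : nat -> C) k : (csum f k + csum g k = csum (fun i => f i + g i) k)%C.
Proof. induction k as [|k IH]; simpl; [ring|]. rewrite <- IH. ring. Qed.

Lemma csum_app (f : nat -> C) k l : csum f (k + l) = (csum f k + csum (fun i => f (k + i)%nat) l)%C.
Proof.
  induction l as [|l IH]; simpl.
  - rewrite Nat.add_0_r. ring.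
  - rewrite Nat.add_succ_r. simpl. rewrite IH. ring.
Qed.

Lemma csum_S_l (f : nat -> C) k : csum f (S k) = (f 0%nat + csum (fun i => f (S i)) k)%C.
Proof.
  induction k as [|k IH]; [simpl; ring|].
  change (csum f (S (S k))) with (csum f (S k) + f (S k))%C. rewrite IH. simpl. ring.
Qed.

Lemma csum_eq0 (f : nat -> C) k : (forall i, (i < k)%nat -> f i = 0%C) -> csum f k = 0%C.
Proof.
  intro H. rewrite (csum_ext f (fun _ => 0%C)) by exact H.
  induction k as [|k IH]; simpl; [reflexivity|]. rewrite IH by (intros; apply H; lia). ring.
Qed.

Lemma sum_n_csum (f : nat -> C) m : sum_n f m = csum f (S m).
Proof.
  induction m as [|m IH].
  - rewrite sum_O. simpl. ring.
  - rewrite sum_Sn, IH. reflexivity.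
Qed.

Lemma laplace_zero z : laplace z (fun _ => 0) = 0%C.
Proof.
  rewrite (laplace_ext z _ (fun _ => 0 * 0)) by (intros; ring).
  rewrite laplace_scal by auto with Rcontinuous. apply injective_projections; simpl; ring.
Qed.

Lemma laplace_iter_by_parts z (r : nat -> R -> R) :
  (forall j s, is_derive (r j) s (r (S j) s)) ->
  forall k, (Cpow z k * laplace z (r 0%nat)
   = csum (fun i => Cpow z i * boundary_term z (r (k - 1 - i)%nat)) k + laplace z (r k))%C.
Proof.
  intros Hr k. induction k as [|k IH]; simpl Cpow; [simpl; ring|].
  rewrite <- Cmult_assoc, IH, Cmult_plus_distr_l, csum_mult_l.
  rewrite (laplace_by_parts z (r k) (r (S k)) (Hr k)) by exact (Rcontinuous_derive _ _ (Hr (S k))).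
  rewrite csum_S_l. replace (S k - 1 - 0)%nat with k by lia.
  rewrite (csum_ext (fun i => Cpow z (S i) * boundary_term z (r (S k - 1 - S i)%nat))%C
                    (fun i => z * (Cpow z i * boundary_term z (r (k - 1 - i)%nat)))%C).
  - simpl Cpow. ring.
  - intros i Hi. replace (S k - 1 - S i)%nat with (k - 1 - i)%nat by lia. simpl. ring.
Qed.

Lemma laplace_poly_sum z (c d : nat -> R) N :
  (forall i, (N < i)%nat -> c i = 0) -> (forall i, (N < i)%nat -> d i = 0) ->
  (forall s, poly_sum c N s = poly_sum d N (1 - s)) ->
  (Cpow z (S N) * laplace z (poly_sum c N)
   = csum (fun i => Cpow z i *
       (RtoC (INR (fact (N - i)) * c (N - i)%nat) * cexp_ray z (/ 2)
        - RtoC ((-1) ^ (N - i) * (INR (fact (N - i)) * d (N - i)%nat)) * cexp_ray z (- / 2)))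
     (S N))%C.
Proof.
  intros Hc Hd Hcd.
  set (r j := poly_sum (Nat.iter j deriv_coef c) N).
  assert (Hr : forall j s, is_derive (r j) s (r (S j) s)).
  { intros j s. exact (is_derive_poly_sum _ N s (iter_deriv_coef_support N c j Hc)). }
  pose proof (laplace_iter_by_parts z r Hr (S N)) as H.
  rewrite (laplace_ext z (r (S N)) (fun _ => 0)), laplace_zero, Cplus_0_r in H.
  2: { intros s _. apply poly_sum_eq0. intros i Hi. rewrite iter_deriv_coef, Hc by lia. ring. }
  change (poly_sum c N) with (r 0%nat). rewrite H.
  apply csum_ext. intros i Hi. unfold boundary_term, r.
  replace (S N - 1 - i)%nat with (N - i)%nat by lia.
  rewrite (poly_sum_deriv_reflect c d N Hc Hd Hcd _ 1), Rminus_eq_0.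
  now rewrite !poly_sum_0, !iter_deriv_coef_0.
Qed.

(** * The Pade identity *)

(* The upper cut-off matters: [Binomial.C n i] is not [0] for [i > n]. *)
Definition shift_coef (K M : nat) (g : nat -> R) (i : nat) : R :=
  if andb (K <=? i)%nat (i <=? K + M)%nat then g (i - K)%nat else 0.

Lemma shift_coef_in K M g i : (K <= i <= K + M)%nat -> shift_coef K M g i = g (i - K)%nat.
Proof.
  intro H. unfold shift_coef.
  now rewrite (proj2 (Nat.leb_le K i)), (proj2 (Nat.leb_le i (K + M))) by lia.
Qed.

Lemma shift_coef_lt K M g i : (i < K)%nat -> shift_coef K M g i = 0.
Proof. intro H. unfold shift_coef. now rewrite (proj2 (Nat.leb_gt K i)) by lia. Qed.

Lemma shift_coef_gt K M g i : (K + M < i)%nat -> shift_coef K M g i = 0.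
Proof.
  intro H. unfold shift_coef.
  now rewrite (proj2 (Nat.leb_gt i (K + M))), Bool.andb_false_r by lia.
Qed.

Lemma poly_sum_shift_coef K M g s :
  poly_sum (shift_coef K M g) (K + M) s = s ^ K * poly_sum g M s.
Proof.
  revert M. induction K as [|K IH]; intro M.
  - unfold poly_sum. rewrite Rmult_1_l. apply sum_eq. intros i Hi.
    now rewrite shift_coef_in, Nat.sub_0_r by lia.
  - unfold poly_sum. simpl (S K + M)%nat. rewrite decomp_sum by lia. simpl pred.
    rewrite shift_coef_lt, Rmult_0_l, Rplus_0_l by lia.
    rewrite (sum_eq _ (fun i => shift_coef K M g i * s ^ i * s)).
    + rewrite <- scal_sum. fold (poly_sum (shift_coef K M g) (K + M) s).
      rewrite IH. unfold poly_sum. simpl (s ^ S K). ring.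
    + intros i Hi. unfold shift_coef. simpl. ring.
Qed.

Definition alt_binomial (n i : nat) : R := (-1) ^ i * Binomial.C n i.

Lemma pow_one_minus n s : (1 - s) ^ n = poly_sum (alt_binomial n) n s.
Proof.
  replace (1 - s) with (- s + 1) by ring. rewrite binomial. unfold poly_sum, alt_binomial.
  apply sum_eq. intros i Hi. replace (- s) with (-1 * s) by ring.
  rewrite pow1, Rpow_mult_distr. ring.
Qed.

(* Taylor coefficients of [s^m (1-s)^(m+1)] at [0] and at [1] (in powers of [1 - s]). *)
Definition pade_coef0 (m : nat) : nat -> R := shift_coef m (S m) (alt_binomial (S m)).
Definition pade_coef1 (m : nat) : nat -> R := shift_coef (S m) m (alt_binomial m).

Lemma poly_sum_pade_coef0 m s : poly_sum (pade_coef0 m) (m + S m) s = bump m s * (1 - s).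
Proof.
  unfold pade_coef0. rewrite poly_sum_shift_coef, <- pow_one_minus. unfold bump.
  rewrite Rpow_mult_distr. simpl. ring.
Qed.

Lemma poly_sum_pade_coef1 m s : poly_sum (pade_coef1 m) (m + S m) (1 - s) = bump m s * (1 - s).
Proof.
  unfold pade_coef1. replace (m + S m)%nat with (S m + m)%nat by lia.
  rewrite poly_sum_shift_coef, <- pow_one_minus. unfold bump.
  replace (1 - (1 - s)) with s by ring. rewrite Rpow_mult_distr. simpl. ring.
Qed.

Lemma pade_coef0_lt m j : (j < m)%nat -> pade_coef0 m j = 0.
Proof. intro H. now apply shift_coef_lt. Qed.

Lemma pade_coef1_le m j : (j <= m)%nat -> pade_coef1 m j = 0.
Proof. intro H. apply shift_coef_lt; lia. Qed.

Lemma pade_coef0_m m : pade_coef0 m m = 1.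
Proof.
  unfold pade_coef0. rewrite shift_coef_in by lia. unfold alt_binomial, Binomial.C.
  rewrite Nat.sub_diag, Nat.sub_0_r, pow_O. change (INR (fact 0)) with 1.
  field. apply INR_fact_neq_0.
Qed.

Lemma pade_coef0_low m i : (i <= m)%nat ->
  INR (fact (m + S m - i)) * pade_coef0 m (m + S m - i) = INR (fact m) * bcoef (S m) i.
Proof.
  intro Hi. unfold pade_coef0. rewrite shift_coef_in by lia.
  unfold alt_binomial, bcoef, Binomial.C.
  replace (2 * S m - i - 1)%nat with (m + S m - i)%nat by lia.
  replace (S m - 1)%nat with m by lia.
  replace (m + S m - i - m)%nat with (S m - i)%nat by lia.
  replace (S m - (S m - i))%nat with i by lia.
  field. repeat split; apply INR_fact_neq_0.
Qed.

Lemma pade_coef1_low m i : (i <= m)%nat ->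
  (-1) ^ (m + S m - i) * (INR (fact (m + S m - i)) * pade_coef1 m (m + S m - i))
  = - (INR (fact m) * betacoef (S m) i).
Proof.
  intro Hi. unfold pade_coef1. rewrite shift_coef_in by lia.
  unfold alt_binomial, betacoef, Binomial.C.
  replace (m + S m - i - S m)%nat with (m - i)%nat by lia.
  replace (2 * S m - i - 1)%nat with (m + S m - i)%nat by lia.
  replace (S m - i - 1)%nat with (m - i)%nat by lia.
  replace (S m - 1)%nat with m by lia.
  replace (m - (m - i))%nat with i by lia.
  assert (Hsq : (-1) ^ (m - i) * (-1) ^ (m - i) = 1).
  { rewrite <- pow_add. replace (m - i + (m - i))%nat with (2 * (m - i))%nat by lia.
    apply pow_1_even. }
  replace (m + S m - i)%nat with ((m - i) + (m - i) + S i)%nat at 1 by lia.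
  replace ((-1) ^ m) with ((-1) ^ (m - i) * (-1) ^ i) by (rewrite <- pow_add; f_equal; lia).
  rewrite !pow_add, Hsq. simpl ((-1) ^ S i).
  field. split; apply INR_fact_neq_0.
Qed.

Definition pade_term (m : nat) (z : C) (i : nat) : C :=
  let j := (m + S m - i)%nat in
  (RtoC (INR (fact j) * pade_coef0 m j)
   - RtoC ((-1) ^ j * (INR (fact j) * pade_coef1 m j)) * Cexp (- z))%C.

Lemma laplace_pade m z :
  (Cpow z (S (m + S m)) * laplace z (fun s => (bump m s * (1 - s))%R) * cexp_ray z (- / 2)
   = csum (fun i => Cpow z i * pade_term m z i) (S (m + S m)))%C.
Proof.
  rewrite (laplace_ext z _ (poly_sum (pade_coef0 m) (m + S m)))
    by (intros; symmetry; apply poly_sum_pade_coef0).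
  rewrite (laplace_poly_sum z (pade_coef0 m) (pade_coef1 m)).
  - rewrite Cmult_comm, csum_mult_l. apply csum_ext. intros i _. unfold pade_term.
    rewrite Cexp_opp.
    cbv zeta. set (j := (m + S m - i)%nat).
    set (a := RtoC (INR (fact j) * pade_coef0 m j)).
    set (b := RtoC ((-1) ^ j * (INR (fact j) * pade_coef1 m j))).
    transitivity (Cpow z i * (a * (cexp_ray z (/ 2) * cexp_ray z (- / 2))
                              - b * (cexp_ray z (- / 2) * cexp_ray z (- / 2))))%C; [ring|].
    rewrite !cexp_ray_plus. replace (/ 2 + - / 2) with 0 by field.
    replace (- / 2 + - / 2) with (-1) by field. rewrite cexp_ray_0. ring.
  - intros i Hi. apply shift_coef_gt; lia.
  - intros i Hi. apply shift_coef_gt; lia.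
  - intro s. now rewrite poly_sum_pade_coef0, poly_sum_pade_coef1.
Qed.

Lemma pade_terms_Delta_tilde m z :
  csum (fun i => Cpow z i * pade_term m z i)%C (S (m + S m))
  = (RtoC (INR (fact m)) * Delta_tilde (S m) z)%C.
Proof.
  change (S (m + S m)) with (S m + S m)%nat. rewrite csum_app. cbv beta.
  rewrite (csum_S_l (fun i => Cpow z (S m + i) * pade_term m z (S m + i))%C m).
  rewrite (csum_eq0 (fun i => Cpow z (S m + S i) * pade_term m z (S m + S i))%C m).
  2: { intros i Hi. unfold pade_term. cbv zeta.
       rewrite pade_coef0_lt, pade_coef1_le by lia. apply injective_projections; simpl; ring. }
  unfold pade_term at 2. cbv zeta. replace (m + S m - (S m + 0))%nat with m by lia.
  rewrite pade_coef0_m, pade_coef1_le by lia.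
  rewrite (csum_ext _ (fun i => RtoC (INR (fact m)) * (RtoC (bcoef (S m) i) * Cpow z i)
      + Cexp (- z) * (RtoC (INR (fact m)) * (RtoC (betacoef (S m) i) * Cpow z i)))%C).
  2: { intros i Hi. unfold pade_term. cbv zeta. rewrite pade_coef0_low, pade_coef1_low by lia.
       rewrite RtoC_opp, !RtoC_mult. ring. }
  rewrite <- csum_plus, <- !csum_mult_l.
  unfold Delta_tilde. rewrite !sum_n_csum. replace (S (S m - 1)) with (S m) by lia.
  rewrite Nat.add_0_r, Rmult_1_r, !Rmult_0_r. ring.
Qed.

Lemma laplace_pade_weight_half_plane_neq0 m z : 0 <= Re z ->
  laplace z (fun s => (bump m s * (1 - s))%R) <> 0%C.
Proof.
  intro Hx. destruct z as [x y].
  rewrite (laplace_ext _ _ (fun s => / 2 * bump m s + 1 * (bump m s * centred s)))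
    by (intros; unfold centred; field).
  rewrite laplace_lin, Cmult_1_l by auto with Rcontinuous.
  exact (laplace_bump_half_plane_neq0 x y m Hx).
Qed.

Theorem lemma4p6 (n : nat) (z : C) :
  (0 < n)%nat -> z <> RtoC 0 -> Delta_tilde n z = RtoC 0 -> Re z < 0.
Proof.
  intros Hn Hz HD. destruct n as [|m]; [lia|].
  destruct (Rlt_or_le (Re z) 0) as [Hneg | Hx]; [exact Hneg | exfalso].
  pose proof (laplace_pade m z) as E.
  rewrite pade_terms_Delta_tilde, HD, Cmult_0_r in E.
  revert E. apply Cmult_neq_0; [apply Cmult_neq_0 |].
  - exact (Cpow_nz z _ Hz).
  - exact (laplace_pade_weight_half_plane_neq0 m z Hx).
  - apply cexp_ray_neq0.
Qed.
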